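(* Let $\overline\alpha$ be coherent. Then for every $\mathfrak A\in K_{\overline\alpha}$ with $\delta(\mathfrak A)>0$ there is $\mathfrak D\in K_{\overline\alpha}$ with $\mathfrak A\subseteq\mathfrak D$ and $\delta(\mathfrak D)=0$.
   Context: Fix a finite relational language $L$ in which every relation symbol has arity at least $2$. $K_L$ is the class of all finite $L$-structures (including the empty one) in which every relation symbol is interpreted symmetrically and irreflexively. Fix $\overline\alpha:L\to(0,1]$, writing $\overline\alpha_E=\overline\alpha(E)$, such that it is not the case that all symbols of $L$ are binary and $\overline\alpha_E=1$ for all $E$. For $\mathfrak A\in K_L$ let $N_E(\mathfrak A)$ be the number of subsets of $A$ on which $E$ holds and $\delta(\mathfrak A)=|A|-\sum_{E}\overline\alpha_E N_E(\mathfrak A)$. $K_{\overline\alpha}=\{\mathfrak A\in K_L:\delta(\mathfrak A')\ge0\text{ for all substructures }\mathfrak A'\subseteq\mathfrak A\}$. $\overline\alpha$ is coherent if there are positive integers $m_E$ ($E\in L$) with $\sum_{E}m_E\overline\alpha_E\in\mathbb Q$. *)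

From HB Require Import structures.
From mathcomp Require Import all_boot all_order all_algebra.
From mathcomp Require Import reals.
Set Implicit Arguments. Unset Strict Implicit. Unset Printing Implicit Defensive.
Import Order.TTheory GRing.Theory Num.Theory.
Local Open Scope ring_scope.

(* An L-structure in K_L on a finite carrier T is given by, for each symbol E,
   the set [rels E] of subsets of T on which E holds; each such subset has
   exactly [ar E] elements (symmetric, irreflexive interpretation). *)

Definition wf_str (L T : finType) (ar : L -> nat)
    (rels : L -> {set {set T}}) : Prop :=
  forall (E : L) (S : {set T}), S \in rels E -> #|S| = ar E.

Definition N_E (L T : finType) (rels : L -> {set {set T}}) (E : L)
    (B : {set T}) : nat :=
  #|[set S in rels E | S \subset B]|.

Definition delta (R : realType) (L T : finType) (alpha : L -> R)
    (rels : L -> {set {set T}}) (B : {set T}) : R :=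
  (#|B|%:R - \sum_(E : L) alpha E * (N_E rels E B)%:R)%R.

Definition in_Kalpha (R : realType) (L T : finType) (ar : L -> nat)
    (alpha : L -> R) (rels : L -> {set {set T}}) : Prop :=
  wf_str ar rels /\ forall B : {set T}, (0 <= delta alpha rels B)%R.

Definition coherent (R : realType) (L : finType) (alpha : L -> R) : Prop :=
  exists m : L -> nat, (forall E, (0 < m E)%N) /\
    exists q : rat, (\sum_(E : L) (m E)%:R * alpha E)%R = ratr q.

(* (T, relsA) is a substructure of (T', relsD) via the injective map f
   (induced substructure, identified with its image). *)
Definition embeds (L T T' : finType) (relsA : L -> {set {set T}})
    (relsD : L -> {set {set T'}}) (f : T -> T') : Prop :=
  injective f /\
  forall (E : L) (S : {set T}), (S \in relsA E) = (f @: S \in relsD E).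

From HB Require Import structures.
From mathcomp Require Import all_boot all_order all_algebra.
From mathcomp Require Import reals.
From mathcomp Require Import ring lra zify.
Set Implicit Arguments. Unset Strict Implicit. Unset Printing Implicit Defensive.
Import Order.TTheory GRing.Theory Num.Theory.
Local Open Scope ring_scope.

(* Call a vertex covered if it lies in a set of defect 0.  By submodularity of
   delta, in K_alpha the union of two sets of defect 0 has defect 0, so when
   every vertex is covered the whole structure has defect 0.  Otherwise pick an
   uncovered x and a set B containing x of least defect e > 0.  Coherence yields
   counts c_E of new E-tuples and a number p of new vertices with
   sum_E alpha_E c_E = e + p exactly.  Put x and the new vertices on a cycle and
   lay the weights of the new tuples end to end on a line cut into a slot of
   length e for x and slots of length 1 for the new vertices; each new tuple
   contains the (at most two, as alpha <= 1) slots its weight meets, and further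
   vertices at a gap that keeps tuples of the same relation distinct.  Then the
   new tuples inside any set weigh at most the total length of its slots, so by
   minimality of B the extension stays in K_alpha, while B together with all
   new vertices has defect 0.  Thus x becomes covered and no uncovered vertex is
   created: induct on the number of uncovered vertices. *)

Section IntervalOverlap.
Variable R : realFieldType.
Implicit Types a b u w : R.

Definition clamp u w (t : R) : R := if t <= u then u else if w <= t then w else t.

(* For [a <= b] and [u <= w], the length of [[a, b] :&: [u, w]]. *)
Definition overlap a b u w : R := clamp u w b - clamp u w a.

Lemma overlapC a b u w : a <= b -> u <= w -> overlap a b u w = overlap u w a b.
Proof. by move=> ? ?; rewrite /overlap /clamp; do ! case: leP => ?; lra. Qed.

Lemma overlap_ge0 a b u w : a <= b -> u <= w -> 0 <= overlap a b u w.
Proof.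
move=> ? ?; rewrite /overlap /clamp.
by case: (leP a u) => ?; case: (leP w a) => ?; case: (leP b u) => ?;
  case: (leP w b) => ?; lra.
Qed.

Lemma overlap_neq0 a b u w : a <= b -> u <= w ->
  overlap a b u w != 0 -> a < w /\ u < b.
Proof.
move=> ? ? /eqP; rewrite /overlap /clamp => ne0.
by split; rewrite ltNge; apply/negP => ?; apply: ne0; do ! case: leP => ?; lra.
Qed.

Lemma sum_overlap_chain (t : nat -> R) (N : nat) u w :
  (forall k, t k <= t k.+1) -> u <= w -> t 0%N <= u -> w <= t N ->
  \sum_(k < N) overlap (t k) (t k.+1) u w = w - u.
Proof.
move=> t_homo uw t0u wtN.
rewrite -(big_mkord xpredT (fun k => clamp u w (t k.+1) - clamp u w (t k))).
by rewrite telescope_sumr // /clamp; do ! case: leP => ?; lra.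
Qed.

End IntervalOverlap.

Section Slots.
Variables (R : archiRealFieldType) (e : R).
Hypothesis e_gt0 : 0 < e.

(* Slot [0] is [[0, e)] and slot [v.+1] is [[e + v, e + v + 1)]. *)
Definition slot_start (v : nat) : R := if v is v'.+1 then e + v'%:R else 0.

Definition slot_of (s : R) : nat :=
  if s < e then 0 else (Num.truncn (s - e)).+1.

Lemma slot_start_homo : {homo slot_start : v w / (v <= w)%N >-> v <= w}.
Proof.
case=> [|v] [|w] //=; first by rewrite addr_ge0 // ltW.
by rewrite ltnS => vw; rewrite lerD2l ler_nat.
Qed.

Lemma slot_start_leS v : slot_start v <= slot_start v.+1.
Proof. exact: slot_start_homo. Qed.

Lemma slot_startSS v : slot_start v.+2 = slot_start v.+1 + 1.
Proof. by rewrite /= -addrA -natr1. Qed.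

Lemma slot_startS_le v : slot_start v.+1 <= slot_start v + 1 + e.
Proof.
case: v => [|v] /=; first by rewrite mulr0n addr0 add0r lerDr ltW.
by rewrite -natr1 addrA lerDl ltW.
Qed.

Lemma slot_ofP s : 0 <= s ->
  slot_start (slot_of s) <= s < slot_start (slot_of s).+1.
Proof.
rewrite /slot_of; case: ltP => [se s_ge0 | es _] /=; first by rewrite s_ge0 addr0.
have /andP[lo hi] := truncn_itv (ltac:(by rewrite subr_ge0) : 0 <= s - e).
by rewrite -lerBrDl lo -ltrBlDl.
Qed.

Lemma slot_of_le s n : 0 <= s -> s < e + n%:R -> (slot_of s <= n)%N.
Proof.
rewrite /slot_of => s_ge0 sn; case: ltP => // es.
by rewrite truncn_lt_nat ?subr_ge0 // ltrBlDl.
Qed.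

End Slots.

Definition psum (R : nmodType) (a : nat -> R) (k : nat) : R := \sum_(j < k) a j.

Lemma psumS (R : nmodType) (a : nat -> R) k : psum a k.+1 = psum a k + a k.
Proof. by rewrite /psum big_ord_recr. Qed.

Lemma psum0 (R : nmodType) (a : nat -> R) : psum a 0 = 0.
Proof. by rewrite /psum big_ord0. Qed.

Section WeightLine.
Variables (R : archiRealFieldType) (a : nat -> R) (amin e : R) (M p : nat).
Hypotheses (amin_gt0 : 0 < amin) (amin_le : forall j, amin <= a j).
Hypotheses (a_le1 : forall j, a j <= 1) (e_gt0 : 0 < e).
Hypothesis psumM : psum a M = e + p%:R.

Let a_ge0 j : 0 <= a j. Proof. exact: le_trans (ltW amin_gt0) (amin_le j). Qed.

Lemma psumD_ge i k : psum a i + k%:R * amin <= psum a (i + k).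
Proof.
elim: k => [|k IH]; first by rewrite mul0r addr0 addn0.
by rewrite addnS psumS -natr1 mulrDl mul1r addrA lerD.
Qed.

Lemma psum_homo : {homo psum a : i j / (i <= j)%N >-> i <= j}.
Proof.
move=> i j ij; have := psumD_ge i (j - i).
by rewrite subnKC //; apply: le_trans; rewrite lerDl mulr_ge0 // ltW.
Qed.

Lemma psum_ge0 i : 0 <= psum a i.
Proof. by rewrite -(psum0 a) psum_homo. Qed.

Let slotP i := slot_ofP e (psum_ge0 i).

Lemma slot_of_psum_le i : (i < M)%N -> (slot_of e (psum a i) <= p)%N.
Proof.
move=> iM; apply: slot_of_le; first exact: psum_ge0.
rewrite -psumM (lt_le_trans _ (psum_homo iM)) // psumS ltrDl.
exact: lt_le_trans amin_gt0 (amin_le i).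
Qed.

Definition weight_overlap i v : R :=
  overlap (psum a i) (psum a i.+1) (slot_start e v) (slot_start e v.+1).

Definition straddles i : bool :=
  slot_start e (slot_of e (psum a i)).+1 < psum a i.+1.

Lemma weight_overlap_neq0 i v : weight_overlap i v != 0 ->
  v = slot_of e (psum a i) \/ v = (slot_of e (psum a i)).+1 /\ straddles i.
Proof.
have s_le : psum a i <= psum a i.+1 by rewrite psumS lerDl.
move=> /(overlap_neq0 s_le (slot_start_leS e_gt0 v)) [lo hi].
have /andP[oi io] := slotP i.
rewrite /straddles; set o := slot_of e _ in oi io *.
case: (ltngtP v o) => [vo | ov | -> ]; [exfalso | | by left].
  by have := slot_start_homo e_gt0 vo; lra.
case: (ltngtP v o.+1) => [vSo | Sov | Sv]; last by right; rewrite -Sv.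
  by move: vSo; rewrite ltnS leqNgt ov.
exfalso; have := slot_start_homo e_gt0 Sov; rewrite slot_startSS.
by have := a_le1 i; rewrite psumS in hi; lra.
Qed.

Lemma same_slot_close i i' : (i < i')%N ->
  slot_of e (psum a i) = slot_of e (psum a i') -> (i' - i)%:R * amin < 1 + e.
Proof.
move=> ii' same; have := psumD_ge i (i' - i); rewrite subnKC; last exact: ltnW.
have /andP[oi _] := slotP i; have /andP[_ io'] := slotP i'.
have := slot_startS_le e_gt0 (slot_of e (psum a i)).
by rewrite same in oi * => *; lra.
Qed.

Lemma same_slot_straddles i i' : (i < i')%N ->
  slot_of e (psum a i) = slot_of e (psum a i') -> ~~ straddles i.
Proof.
move=> ii' same; rewrite /straddles same -leNgt.
by have /andP[_ /ltW] := slotP i'; apply: le_trans; apply: psum_homo.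
Qed.

Lemma sum_weight_overlap_slot v : (v <= p)%N ->
  \sum_(i < M) weight_overlap i v = slot_start e v.+1 - slot_start e v.
Proof.
move=> vp; apply: sum_overlap_chain.
- by move=> k; rewrite psumS lerDl.
- exact: slot_start_leS.
- by rewrite psum0 (slot_start_homo e_gt0 (leq0n v)).
- by rewrite psumM (slot_start_homo e_gt0 (_ : v.+1 <= p.+1)%N).
Qed.

Lemma sum_weight_overlap_tuple i : (i < M)%N ->
  \sum_(v < p.+1) weight_overlap i v = a i.
Proof.
move=> iM; have s_le : psum a i <= psum a i.+1 by rewrite psumS lerDl.
under eq_bigr => v _ do rewrite /weight_overlap overlapC ?slot_start_leS //.
rewrite sum_overlap_chain //.
- by rewrite psumS addrAC subrr add0r.
- exact: slot_start_leS.
- exact: psum_ge0.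
- by rewrite /= -psumM psum_homo.
Qed.

End WeightLine.

Section CyclicRuns.
Variable p : nat.
Implicit Types (o d r k : nat).

Lemma inZp_val k : (k < p.+1)%N -> val (inZp k : 'I_p.+1) = k.
Proof. by move=> kp; rewrite /= modn_small. Qed.

Lemma inZpD m n : inZp m + inZp n = inZp (m + n) :> 'I_p.+1.
Proof. by apply: val_inj; rewrite /= modnDm. Qed.

Lemma inZp_neq0 k : (0 < k)%N -> (k < p.+1)%N -> inZp k != 0 :> 'I_p.+1.
Proof. by move=> k_gt0 kp; apply/eqP => /(congr1 val); rewrite inZp_val //=; lia. Qed.

Definition anchored_run o d r : {set 'I_p.+1} :=
  inZp o |: [set inZp o + inZp (d + k) | k : 'I_r.-1].

Lemma anchored_runP o d r x : x \in anchored_run o d r ->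
  x = inZp o \/ exists k : 'I_r.-1, x = inZp o + inZp (d + k).
Proof. by case/setU1P => [->|/imsetP[k _ ->]]; [left | right; exists k]. Qed.

Lemma anchored_run_anchor o d r : inZp o \in anchored_run o d r.
Proof. exact: setU11. Qed.

Lemma anchored_run_next o r : (2 <= r)%N -> inZp o.+1 \in anchored_run o 1 r.
Proof.
move=> r_ge2; have k0 : (0 < r.-1)%N by lia.
apply/setU1P; right; apply/imsetP; exists (Ordinal k0) => //.
by rewrite inZpD /= addn0 addn1.
Qed.

Lemma anchored_run_card o d r : (2 <= r)%N -> (0 < d)%N -> (d + r <= p.+1)%N ->
  #|anchored_run o d r| = r.
Proof.
move=> r_ge2 d_gt0 drp; rewrite cardsU1 card_imset ?card_ord.
  suff -> : (inZp o : 'I_p.+1) \notin [set inZp o + inZp (d + k) | k : 'I_r.-1] by lia.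
  apply/negP => /imsetP[k _ /eqP]; rewrite -subr_eq0 opprD addrA subrr add0r oppr_eq0.
  by apply/negP; rewrite inZp_neq0 //; have := ltn_ord k; lia.
move=> k1 k2 /addrI /(congr1 val).
have := ltn_ord k1; have := ltn_ord k2 => k2r k1r.
by rewrite !inZp_val; [move=> ?; apply: ord_inj; lia | lia | lia].
Qed.

Lemma anchored_run_gap_le o d d' r : (2 <= r)%N -> (0 < d)%N -> (d < p.+1)%N ->
  (d' + r <= p.+1)%N -> anchored_run o d r = anchored_run o d' r -> (d' <= d)%N.
Proof.
move=> r_ge2 d_gt0 dp d'rp same.
have k0 : (0 < r.-1)%N by lia.
have : inZp o + inZp (d + Ordinal k0) \in anchored_run o d r.
  by apply/setU1P; right; apply/imsetP; exists (Ordinal k0).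
rewrite same => /anchored_runP[|[k]].
  by rewrite -{2}[inZp o]addr0 => /addrI /eqP; rewrite addn0 (negPf (inZp_neq0 _ _)).
move=> /addrI /(congr1 val); have := ltn_ord k => kr.
by rewrite !inZp_val /=; lia.
Qed.

Lemma anchored_run_inj o o' d d' r : (2 <= r)%N -> (0 < d)%N -> (0 < d')%N ->
  (d + r + d' + r <= p.+1)%N -> (o < p.+1)%N -> (o' < p.+1)%N ->
  anchored_run o d r = anchored_run o' d' r -> o = o' /\ d = d'.
Proof.
move=> r_ge2 d_gt0 d'_gt0 bound op o'p same.
suff oo' : inZp o = inZp o' :> 'I_p.+1.
  have {oo'} oo' : o = o' by move/(congr1 val): oo'; rewrite !inZp_val.
  subst o'; split=> //; apply/eqP; rewrite eqn_leq.
  have le_dd' := anchored_run_gap_le r_ge2 d'_gt0 _ _ (esym same).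
  have le_d'd := anchored_run_gap_le r_ge2 d_gt0 _ _ same.
  by rewrite le_dd' ?le_d'd //; lia.
have : inZp o' \in anchored_run o d r by rewrite same anchored_run_anchor.
case/anchored_runP => [-> //|[k o'E]].
have : inZp o \in anchored_run o' d' r by rewrite -same anchored_run_anchor.
case/anchored_runP => [-> //|[k' oE]]; exfalso; move: oE.
rewrite o'E -addrA -{1}[inZp o]addr0 => /addrI /esym /eqP.
have := ltn_ord k; have := ltn_ord k' => k'r kr.
by rewrite !inZpD; apply/negP; rewrite inZp_neq0 //; lia.
Qed.

End CyclicRuns.

Section Defect.
Variables (R : realType) (L T : finType) (ar : L -> nat) (alpha : L -> R).
Variable rels : L -> {set {set T}}.
Hypothesis alpha_ge0 : forall E, 0 <= alpha E.
Implicit Types X Y Z : {set T}.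

Lemma N_E_setUI E X Y :
  (N_E rels E X + N_E rels E Y <= N_E rels E (X :|: Y) + N_E rels E (X :&: Y))%N.
Proof.
rewrite /N_E; set PX := [set S in rels E | S \subset X].
set PY := [set S in rels E | S \subset Y].
have -> : [set S in rels E | S \subset X :&: Y] = PX :&: PY.
  by apply/setP => S; rewrite !inE subsetI andbACA andbb.
rewrite -cardsUI leq_add2r subset_leq_card //.
apply/subsetP => S; rewrite !inE => /orP[] /andP[-> /subset_trans]; apply.
  exact: subsetUl.
exact: subsetUr.
Qed.

Lemma delta_setUI X Y :
  delta alpha rels (X :|: Y) + delta alpha rels (X :&: Y) <=
  delta alpha rels X + delta alpha rels Y.
Proof.
rewrite /delta addrACA [X in _ <= X]addrACA -!natrD cardsUI lerD2l -!opprD lerN2.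
rewrite -!big_split.
apply: ler_sum => E _ /=; rewrite -!mulrDr ler_wpM2l // -!natrD ler_nat.
exact: N_E_setUI.
Qed.

Lemma N_E_eq0 E Z : wf_str ar rels -> (#|Z| < ar E)%N -> N_E rels E Z = 0%N.
Proof.
move=> wf Z_small; apply/eqP; rewrite cards_eq0; apply/eqP/setP => S; rewrite !inE.
by apply/negP => /andP[/wf S_ar /subset_leq_card]; lia.
Qed.

Lemma delta_set0 : (forall E, 1 <= ar E)%N -> wf_str ar rels ->
  delta alpha rels set0 = 0.
Proof.
move=> ar_gt0 wf; rewrite /delta cards0 big1 ?subr0 // => E _.
by rewrite N_E_eq0 ?mulr0 ?cards0.
Qed.

Lemma delta_setU_eq0 X Y : in_Kalpha ar alpha rels ->
  delta alpha rels X = 0 -> delta alpha rels Y = 0 -> delta alpha rels (X :|: Y) = 0.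
Proof.
move=> [_ ge0] X0 Y0; have := delta_setUI X Y.
by have := ge0 (X :|: Y); have := ge0 (X :&: Y); rewrite X0 Y0; lra.
Qed.

Definition covered (v : T) : bool :=
  [exists Z : {set T}, (v \in Z) && (delta alpha rels Z == 0)].

Lemma delta_setT_covered : (forall E, 1 <= ar E)%N -> in_Kalpha ar alpha rels ->
  (forall v, covered v) -> delta alpha rels setT = 0.
Proof.
move=> ar_gt0 K all_cov.
have /eqP d0 := delta_set0 ar_gt0 (proj1 K).
have [Z /eqP Z0 Zmax] := @arg_maxnP _ set0 (fun Z => delta alpha rels Z == 0)
  (fun Z => #|Z|) d0.
suff -> : setT = Z by [].
apply/eqP; rewrite eq_sym eqEsubset subsetT /=; apply/subsetP => v _.
apply/negPn/negP => vZ; have /existsP[Z' /andP[vZ' /eqP Z'0]] := all_cov v.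
have := Zmax (Z :|: Z'); rewrite (delta_setU_eq0 K Z0 Z'0) eqxx => /(_ isT).
have : Z \proper Z :|: Z'.
  by rewrite properUl //; apply: contra vZ => /subsetP; apply.
by move/proper_card; lia.
Qed.

End Defect.

Lemma embeds_id (L T : finType) (rels : L -> {set {set T}}) : embeds rels rels id.
Proof. by split=> // E S; rewrite imset_id. Qed.

Lemma embeds_comp (L T1 T2 T3 : finType) (rels1 : L -> {set {set T1}})
    (rels2 : L -> {set {set T2}}) (rels3 : L -> {set {set T3}}) f g :
  embeds rels1 rels2 f -> embeds rels2 rels3 g -> embeds rels1 rels3 (g \o f).
Proof.
move=> [f_inj f_rels] [g_inj g_rels]; split; first exact: inj_comp.
by move=> E S; rewrite f_rels g_rels imset_comp.
Qed.

Lemma ratr_num_den (R : numFieldType) (q : rat) : 0 < q ->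
  (`|denq q|%N)%:R * ratr q = (`|numq q|%N)%:R :> R.
Proof.
move=> q_gt0; rewrite /ratr !natr_absz !gtr0_norm ?numq_gt0 ?denq_gt0 //.
by rewrite mulrC mulfVK // intr_eq0 denq_neq0.
Qed.

(* Scaling the rational combination [sum m_E alpha_E] by a multiple of its
   denominator makes it an integer, as large as we like. *)
Lemma coherent_nat_combination (R : realType) (L : finType) (alpha : L -> R)
    (E0 : L) : (forall E, 0 < alpha E) -> coherent alpha ->
  forall (n : nat) (N : L -> nat), exists (k : L -> nat) (s : nat),
    [/\ forall E, (N E <= k E)%N, (n <= s)%N & \sum_E alpha E * (k E)%:R = s%:R].
Proof.
move=> alpha_gt0 [m [m_gt0 [q q_eq]]] n N.
have q_gt0 : 0 < q.
  rewrite -(ltr0q R) -q_eq (bigD1 E0) //= ltr_pwDl ?mulr_gt0 ?ltr0n //.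
  by rewrite sumr_ge0 // => E _; rewrite mulr_ge0 ?ler0n // ltW.
pose t := (n + \sum_E N E)%N.
have dq_gt0 : (0 < `|denq q|)%N by rewrite absz_gt0 denq_neq0.
have nq_gt0 : (0 < `|numq q|)%N by rewrite absz_gt0 gt_eqF ?numq_gt0.
exists (fun E => `|denq q| * t * m E)%N, (`|numq q| * t)%N; split.
- move=> E; have NEt : (N E <= t)%N by rewrite /t (bigD1 E) //=; lia.
  by apply: (leq_trans NEt); rewrite mulnAC leq_pmull // muln_gt0 dq_gt0 m_gt0.
- by apply: leq_trans (leq_pmull _ nq_gt0); rewrite leq_addr.
rewrite natrM -(ratr_num_den R q_gt0) -q_eq mulr_sumr mulr_suml.
apply: eq_bigr => E _.
by rewrite !natrM; ring.
Qed.

Lemma exists_uniform_lower_bound (R : realFieldType) (L : finType)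
    (alpha : L -> R) : (forall E, 0 < alpha E <= 1) ->
  exists2 amin, 0 < amin & forall E, amin <= alpha E.
Proof.
move=> alpha01; exists (\prod_E alpha E).
  by apply: prodr_gt0 => E _; case/andP: (alpha01 E).
move=> E; rewrite (bigD1 E) //= ler_piMr //; first by case/andP: (alpha01 E) => /ltW.
by apply: prodr_ile1 => E' _; case/andP: (alpha01 E') => /ltW ->.
Qed.

Lemma exists_type_sequence (L : finType) (E0 : L) (c : L -> nat) :
  exists (M : nat) (ty : nat -> L), forall E, #|[set i : 'I_M | ty i == E]| = c E.
Proof.
pose s := flatten [seq nseq (c E) E | E <- enum L].
exists (size s), (nth E0 s) => E.
rewrite -sum1_card (eq_bigl (fun i : 'I_(size s) => nth E0 s i == E)); last first.
  by move=> i; rewrite inE.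
rewrite -(big_mkord (fun i => nth E0 s i == E) (fun _ => 1%N)).
rewrite -(big_nth E0 (fun y => y == E) (fun _ => 1%N)) sum1_count count_flatten.
rewrite -map_comp sumnE big_map big_enum /= (bigD1 E) //= count_nseq eqxx mul1n.
by rewrite big1 ?addn0 // => E' /negPf; rewrite count_nseq => ->.
Qed.

Lemma sum_by_type (R : pzSemiRingType) (I L : finType) (w : L -> R) (ty : I -> L)
    (P : pred I) :
  \sum_E w E * (#|[set i | (ty i == E) && P i]|)%:R = \sum_(i | P i) w (ty i).
Proof.
rewrite (partition_big ty xpredT) //=; apply: eq_bigr => E _.
rewrite (eq_bigr (fun=> w E)) => [|i /andP[_ /eqP->] //].
rewrite sumr_const mulr_natr; congr (_ *+ _).
by apply: eq_card => i; rewrite !inE andbC.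
Qed.

Lemma inl_inj {A B : Type} : injective (@inl A B).
Proof. by move=> t t' []. Qed.

Lemma cards_inl_inr (T1 T2 : finType) (Z : {set T1 + T2}) :
  #|Z| = (#|inl @^-1: Z| + #|inr @^-1: Z|)%N.
Proof.
rewrite -!sum1_card big_sumType /=.
by congr (_ + _)%N; apply: eq_bigl => y; rewrite !inE.
Qed.

Section Extension.
Variables (R : realType) (L : finType) (ar : L -> nat) (alpha : L -> R).
Hypothesis ar_ge2 : forall E, (2 <= ar E)%N.
Hypotheses (alpha_ge0 : forall E, 0 <= alpha E) (alpha_le1 : forall E, alpha E <= 1).
Variables (T : finType) (rels : L -> {set {set T}}).
Hypothesis relsK : in_Kalpha ar alpha rels.
Variables (x : T) (B : {set T}) (e : R).
Hypotheses (xB : x \in B) (deltaB : delta alpha rels B = e) (e_gt0 : 0 < e).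
Hypothesis B_min : forall Z : {set T}, x \in Z -> e <= delta alpha rels Z.
Variables (p M : nat) (ty : nat -> L) (c : L -> nat).
Hypothesis ty_count : forall E, #|[set i : 'I_M | ty i == E]| = c E.
Hypothesis c_sum : \sum_E alpha E * (c E)%:R = e + p%:R.
Variables (amin : R) (D : nat).
Hypotheses (amin_gt0 : 0 < amin) (amin_le : forall E, amin <= alpha E).
Hypothesis D_large : 1 + e < D%:R * amin.
Hypothesis p_large : forall E, (2 * (D.+1 + ar E) <= p.+1)%N.

Let a j := alpha (ty j).
Let amin_a j : amin <= a j := amin_le (ty j).
Let a_le1 j : a j <= 1 := alpha_le1 (ty j).

Let psum_a : psum a M = e + p%:R.
Proof.
rewrite -c_sum /psum -(sum_by_type alpha (fun i : 'I_M => ty i) xpredT).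
apply: eq_bigr => E _; rewrite -ty_count; congr (_ * (_)%:R).
by apply: eq_card => i; rewrite !inE andbT.
Qed.

Let D_gt0 : (0 < D)%N.
Proof.
by rewrite lt0n; apply: contraTneq D_large => ->; rewrite mul0r -leNgt addr_ge0 // ltW.
Qed.

Definition cycle_vertex (v : 'I_p.+1) : T + 'I_p :=
  if unlift ord0 v is Some w then inr w else inl x.

Lemma cycle_vertex0 : cycle_vertex ord0 = inl x.
Proof. by rewrite /cycle_vertex unlift_none. Qed.

Lemma cycle_vertex_lift w : cycle_vertex (lift ord0 w) = inr w.
Proof. by rewrite /cycle_vertex liftK. Qed.

Lemma cycle_vertex_inj : injective cycle_vertex.
Proof.
move=> v1 v2; rewrite /cycle_vertex.
by case: unliftP => [w1 ->|->]; case: unliftP => [w2 ->|->] // [->].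
Qed.

(* Tuples sharing a slot get distinct gaps, unless one of them straddles. *)
Definition gap i : nat := if straddles a e i then 1%N else (i %% D).+2.

Definition new_tuple i : {set T + 'I_p} :=
  cycle_vertex @: anchored_run p (slot_of e (psum a i)) (gap i) (ar (ty i)).

Definition ext_rels E : {set {set T + 'I_p}} :=
  [set inl @: S | S : {set T} in rels E] :|: [set new_tuple i | i : 'I_M & ty i == E].

Lemma gap_bounds i : (0 < gap i <= D.+1)%N.
Proof. by rewrite /gap; case: straddles => //; have := ltn_pmod i D_gt0; lia. Qed.

Lemma new_tuple_card i : #|new_tuple i| = ar (ty i).
Proof.
rewrite card_imset; last exact: cycle_vertex_inj.
have := gap_bounds i; have := p_large (ty i) => ? ?.
by apply: anchored_run_card => //; lia.
Qed.

Lemma new_tuple_new_vertex i : exists w, inr w \in new_tuple i.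
Proof.
apply/existsP; apply: contraT; rewrite negb_exists => /forallP no_new.
suff : new_tuple i \subset [set inl x].
  by move/subset_leq_card; rewrite cards1 new_tuple_card; have := ar_ge2 (ty i); lia.
apply/subsetP => -[t /imsetP[v _]|w]; last by rewrite (negPf (no_new w)).
by rewrite /cycle_vertex; case: unlift => // -[->]; rewrite set11.
Qed.

Lemma old_neq_new_tuple i (S : {set T}) : inl @: S != new_tuple i.
Proof.
apply/eqP => S_i; have [w] := new_tuple_new_vertex i.
by rewrite -S_i => /imsetP[].
Qed.

Lemma new_tuple_neq i i' : (i < i')%N -> (i' < M)%N -> ty i = ty i' ->
  new_tuple i != new_tuple i'.
Proof.
move=> ii' i'M same_ty; apply/eqP => /(imset_inj cycle_vertex_inj).
have iM : (i < M)%N := ltn_trans ii' i'M.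
have := slot_of_psum_le amin_gt0 amin_a psum_a iM.
have := slot_of_psum_le amin_gt0 amin_a psum_a i'M.
have := gap_bounds i; have := gap_bounds i'; have := p_large (ty i).
rewrite -same_ty => ? ? ? ? ?; case/anchored_run_inj => //; try lia.
move=> same_slot same_gap.
have close := same_slot_close amin_gt0 amin_a e_gt0 ii' same_slot.
have dist_lt : (i' - i < D)%N.
  rewrite -(ltr_nat R) -(ltr_pM2r amin_gt0); exact: lt_trans close D_large.
move: same_gap; rewrite /gap.
rewrite (negPf (same_slot_straddles amin_gt0 amin_a ii' same_slot)).
case: straddles => // -[] /esym /eqP; rewrite eqn_mod_dvd ?(ltnW ii') // => /dvdn_leq.
by lia.
Qed.

Lemma weight_overlap_new_tuple i (v : 'I_p.+1) :
  weight_overlap a e i v != 0 -> cycle_vertex v \in new_tuple i.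
Proof.
move=> /(weight_overlap_neq0 amin_gt0 amin_a a_le1 e_gt0) => slot_v.
apply: imset_f; rewrite -[v]valZpK; case: slot_v => [-> | [-> str_i]].
  exact: anchored_run_anchor.
by rewrite /gap str_i; apply: anchored_run_next.
Qed.

(* Only slots of vertices of the tuple meet its weight interval. *)
Lemma new_tuple_weight (Z : {set T + 'I_p}) (i : 'I_M) : new_tuple i \subset Z ->
  a i = \sum_(v < p.+1 | cycle_vertex v \in Z) weight_overlap a e i v.
Proof.
move=> iZ; rewrite -(sum_weight_overlap_tuple amin_gt0 amin_a e_gt0 psum_a (ltn_ord i)).
rewrite [RHS]big_mkcond; apply: eq_bigr => v _; case: ifPn => // vZ.
apply/eqP; apply: contraNT vZ => /weight_overlap_new_tuple.
exact: (subsetP iZ).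
Qed.

Lemma new_weight_le (Z : {set T + 'I_p}) :
  \sum_(i : 'I_M | new_tuple i \subset Z) a i <=
  (if inl x \in Z then e else 0) + #|inr @^-1: Z|%:R.
Proof.
have wo_ge0 i v : 0 <= weight_overlap a e i v.
  by rewrite overlap_ge0 ?slot_start_leS // ?psumS ?lerDl // (le_trans (ltW amin_gt0)).
rewrite (eq_bigr _ (fun i => @new_tuple_weight Z i)).
apply: (@le_trans _ _ (\sum_(i < M) \sum_(v < p.+1 | cycle_vertex v \in Z)
    weight_overlap a e i v)).
  rewrite [X in X <= _]big_mkcond /=; apply: ler_sum => i _.
  by case: ifP => // _; apply: sumr_ge0.
rewrite exchange_big /=.
under eq_bigr => v _ do
  rewrite (sum_weight_overlap_slot amin_gt0 amin_a e_gt0 psum_a (ltn_ord v)).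
rewrite big_mkcond big_ord_recl /= cycle_vertex0; apply: lerD.
  by case: ifP => _ //=; rewrite ?mulr0n ?subr0 ?addr0.
rewrite -sum1_card natr_sum [X in _ <= X]big_mkcond; apply: ler_sum => w _.
rewrite cycle_vertex_lift inE /bump leq0n add1n add0n -natr1.
by case: ifP => // _; lra.
Qed.

Lemma ext_relsP E S : S \in ext_rels E ->
  (exists2 S0, S0 \in rels E & S = inl @: S0) \/
  exists2 i : 'I_M, ty i = E & S = new_tuple i.
Proof.
case/setUP => /imsetP[S0]; first by left; exists S0.
by rewrite inE => /eqP; right; exists S0.
Qed.

Lemma N_E_ext_le E (Z : {set T + 'I_p}) :
  (N_E ext_rels E Z <= N_E rels E (inl @^-1: Z) +
     #|[set i : 'I_M | (ty i == E) && (new_tuple i \subset Z)]|)%N.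
Proof.
rewrite /N_E; set old := [set S in rels E | _].
set new := [set i : 'I_M | _ && _].
have ext_sub : [set S in ext_rels E | S \subset Z] \subset
    (fun S : {set T} => inl @: S) @: old :|: (fun i : 'I_M => new_tuple i) @: new.
  apply/subsetP => S; rewrite inE => /andP[/ext_relsP[[S0 S0E ->]|[i iE ->]] SZ].
    apply/setUP; left; apply: imset_f; rewrite inE S0E /=.
    by apply/subsetP => t tS0; rewrite inE (subsetP SZ) ?imset_f.
  by apply/setUP; right; apply: imset_f; rewrite inE iE eqxx SZ.
apply: leq_trans (subset_leq_card ext_sub) _.
by apply: leq_trans (leq_card_setU _ _) _; apply: leq_add; apply: leq_imset_card.
Qed.

Lemma new_tuple_not_old (Z : {set T}) i : ~~ (new_tuple i \subset inl @: Z).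
Proof.
have [w wi] := new_tuple_new_vertex i.
by apply/negP => /subsetP/(_ _ wi)/imsetP[].
Qed.

Lemma N_E_ext_old E (Z : {set T}) : N_E ext_rels E (inl @: Z) = N_E rels E Z.
Proof.
apply/eqP; rewrite eqn_leq; apply/andP; split.
  apply: leq_trans (N_E_ext_le E _) _.
  have -> : @inl T 'I_p @^-1: (inl @: Z) = Z.
    by apply/setP => t; rewrite inE mem_imset //; exact: inl_inj.
  rewrite -[X in (_ <= X)%N]addn0 leq_add2l leqn0 cards_eq0; apply/eqP/setP => i.
  by rewrite !inE (negPf (new_tuple_not_old Z i)) andbF.
rewrite /N_E -(card_imset _ (imset_inj (@inl_inj T 'I_p))); apply: subset_leq_card.
apply/subsetP => S /imsetP[S0]; rewrite inE => /andP[S0E S0Z] ->.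
by rewrite inE imsetS // andbT; apply/setUP; left; apply: imset_f.
Qed.

Lemma delta_ext_old (Z : {set T}) :
  delta alpha ext_rels (inl @: Z) = delta alpha rels Z.
Proof.
rewrite /delta card_imset; last exact: inl_inj.
by congr (_ - _); apply: eq_bigr => E _; rewrite N_E_ext_old.
Qed.

Lemma ext_wf : wf_str ar ext_rels.
Proof.
move=> E S /ext_relsP[[S0 S0E ->]|[i <- ->]]; last exact: new_tuple_card.
by rewrite card_imset; [exact: (proj1 relsK) | exact: inl_inj].
Qed.

(* Minimality of [B] pays for the slot of [x]; each new vertex pays for its own. *)
Lemma ext_in_Kalpha : in_Kalpha ar alpha ext_rels.
Proof.
split; first exact: ext_wf.
move=> Z; set Zo := inl @^-1: Z.
have N_le : \sum_E alpha E * (N_E ext_rels E Z)%:R <=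
    \sum_E alpha E * (N_E rels E Zo)%:R + \sum_(i : 'I_M | new_tuple i \subset Z) a i.
  rewrite -(sum_by_type alpha (fun i : 'I_M => ty i)) -big_split /=.
  apply: ler_sum => E _; rewrite -mulrDr ler_wpM2l // -natrD ler_nat.
  exact: N_E_ext_le.
have new_le := new_weight_le Z.
have x_le : (if inl x \in Z then e else 0) <= delta alpha rels Zo.
  by case: ifP => xZ; [apply: B_min; rewrite inE | exact: (proj2 relsK)].
move: x_le N_le new_le; rewrite /delta [#|Z|]cards_inl_inr natrD -/Zo.
set cx := if _ then _ else _; set new := \sum_(i < M | _) _; lra.
Qed.

Definition B_ext : {set T + 'I_p} := [set y | if y is inl t then t \in B else true].

Lemma N_E_B_ext E : (N_E rels E B + c E <= N_E ext_rels E B_ext)%N.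
Proof.
pose old := (fun S : {set T} => @inl T 'I_p @: S) @: [set S in rels E | S \subset B].
pose new := (fun i : 'I_M => new_tuple i) @: [set i : 'I_M | ty i == E].
have old_card : #|old| = N_E rels E B.
  by rewrite card_imset //; apply: imset_inj inl_inj.
have new_card : #|new| = c E.
  rewrite card_in_imset ?ty_count // => i i'; rewrite !inE => /eqP iE /eqP i'E.
  apply: contra_eq => ii'; case: (ltngtP i i') => [lt | lt | /val_inj eq_ii'].
  - by apply: new_tuple_neq; rewrite // iE i'E.
  - by rewrite eq_sym; apply: new_tuple_neq; rewrite // iE i'E.
  - by rewrite eq_ii' eqxx in ii'.
have disj : [disjoint old & new].
  apply/pred0P => S; apply/andP => -[/imsetP[S0 _ ->] /imsetP[i _]].
  exact/eqP/old_neq_new_tuple.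
rewrite -old_card -new_card -cardsUI disjoint_setI0 // cards0 addn0 subset_leq_card //.
apply/subsetP => S /setUP[/imsetP[S0]|/imsetP[i]]; rewrite inE.
  move=> /andP[S0E S0B] ->; rewrite inE; apply/andP; split.
    by apply/setUP; left; apply: imset_f.
  by apply/subsetP => _ /imsetP[t tS0 ->]; rewrite inE (subsetP S0B).
move=> iE ->; rewrite inE; apply/andP; split.
  by apply/setUP; right; apply: imset_f; rewrite inE.
by apply/subsetP => _ /imsetP[v _ ->]; rewrite inE /cycle_vertex; case: unlift.
Qed.

Lemma delta_B_ext : delta alpha ext_rels B_ext = 0.
Proof.
apply/eqP; rewrite eq_le (proj2 ext_in_Kalpha) andbT /delta.
have -> : #|B_ext| = (#|B| + p)%N.
  rewrite cards_inl_inr; congr (_ + _)%N; first by apply: eq_card => t; rewrite !inE.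
  by rewrite -[RHS]card_ord; apply: eq_card => w; rewrite !inE.
have N_ge : \sum_E alpha E * (N_E rels E B)%:R + \sum_E alpha E * (c E)%:R <=
    \sum_E alpha E * (N_E ext_rels E B_ext)%:R.
  rewrite -big_split /=; apply: ler_sum => E _.
  by rewrite -mulrDr ler_wpM2l // -natrD ler_nat N_E_B_ext.
move: N_ge; rewrite c_sum -deltaB /delta natrD => N_ge; lra.
Qed.

Lemma embeds_ext : embeds rels ext_rels inl.
Proof.
split=> [|E S]; first exact: inl_inj.
apply/idP/idP => [SE | /ext_relsP[[S0 S0E /(imset_inj inl_inj) -> //]|[i _ S_i]]].
  by apply/setUP; left; apply: imset_f.
by have := old_neq_new_tuple i S; rewrite S_i eqxx.
Qed.

Lemma covered_ext y : ~~ covered alpha ext_rels y ->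
  exists2 t, y = inl t & (t != x) && ~~ covered alpha rels t.
Proof.
have B_ext_cov y' : y' \in B_ext -> covered alpha ext_rels y'.
  by move=> y'B; apply/existsP; exists B_ext; rewrite y'B delta_B_ext eqxx.
case: y => [t | w] t_unc; last by rewrite B_ext_cov ?inE in t_unc.
exists t => //; apply/andP; split.
  by apply: contraNneq t_unc => ->; rewrite B_ext_cov ?inE.
apply: contra t_unc => /existsP[Z /andP[tZ /eqP Z0]].
apply/existsP; exists (inl @: Z).
by rewrite mem_imset ?tZ ?delta_ext_old ?Z0 ?eqxx //; exact: inl_inj.
Qed.

Lemma extension_covers : exists (T1 : finType) (rels1 : L -> {set {set T1}}) f,
  [/\ in_Kalpha ar alpha rels1, embeds rels rels1 f &
      forall y, ~~ covered alpha rels1 y ->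
        exists2 t, y = f t & (t != x) && ~~ covered alpha rels t].
Proof.
exists (T + 'I_p)%type, ext_rels, inl.
by split; [exact: ext_in_Kalpha | exact: embeds_ext | exact: covered_ext].
Qed.

End Extension.

Section Covering.
Variables (R : realType) (L : finType) (ar : L -> nat) (alpha : L -> R) (E0 : L).
Hypotheses (ar_ge2 : forall E, (2 <= ar E)%N) (alpha01 : forall E, 0 < alpha E <= 1).
Hypothesis alpha_coh : coherent alpha.

Let alpha_gt0 E : 0 < alpha E. Proof. by case/andP: (alpha01 E). Qed.
Let alpha_ge0 E : 0 <= alpha E. Proof. exact: ltW. Qed.
Let alpha_le1 E : alpha E <= 1. Proof. by case/andP: (alpha01 E). Qed.

Lemma cover_vertex (T : finType) (rels : L -> {set {set T}}) (x : T) :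
  in_Kalpha ar alpha rels -> ~~ covered alpha rels x ->
  exists (T1 : finType) (rels1 : L -> {set {set T1}}) f,
  [/\ in_Kalpha ar alpha rels1, embeds rels rels1 f &
      forall y, ~~ covered alpha rels1 y ->
        exists2 t, y = f t & (t != x) && ~~ covered alpha rels t].
Proof.
move=> relsK x_unc.
have [B xB B_min] :=
  @arg_minP _ _ _ [set x] (fun Z => x \in Z) (delta alpha rels) (set11 x).
set e := delta alpha rels B.
have e_gt0 : 0 < e.
  rewrite lt_def (proj2 relsK B) andbT; apply: contraNneq x_unc => e0.
  by apply/existsP; exists B; rewrite xB -/e e0 eqxx.
have [amin amin_gt0 amin_le] := exists_uniform_lower_bound alpha01.
(* Tuples sharing a slot are fewer than [D] apart; [n] leaves room on the
   cycle for two runs with gaps up to [D.+1]. *)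
pose D := (Num.truncn ((1 + e) / amin)).+1.
have D_large : 1 + e < D%:R * amin by rewrite -ltr_pdivrMr // truncnS_gt.
pose n := (#|B| + 2 * (D.+1 + \max_E ar E))%N.
have [k [s [k_ge s_ge k_sum]]] :=
  coherent_nat_combination E0 alpha_gt0 alpha_coh n (fun E => N_E rels E B).
pose c E := (k E - N_E rels E B)%N.
pose p := (s - #|B|)%N.
have [M [ty ty_count]] := exists_type_sequence E0 c.
have c_sum : \sum_E alpha E * (c E)%:R = e + p%:R.
  rewrite /p natrB; last by move: s_ge; rewrite /n; lia.
  under eq_bigr do rewrite natrB // mulrBr.
  by rewrite sumrB k_sum /e /delta; ring.
have p_large E : (2 * (D.+1 + ar E) <= p.+1)%N.
  by have := leq_bigmax E (F := ar); move: s_ge; rewrite /p /n; lia.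
exact: (extension_covers ar_ge2 alpha_ge0 alpha_le1 relsK xB erefl e_gt0 B_min
  ty_count c_sum amin_gt0 amin_le D_large p_large).
Qed.

Lemma all_covered_tight (T : finType) (rels : L -> {set {set T}}) :
  in_Kalpha ar alpha rels -> (forall v, covered alpha rels v) ->
  exists (T' : finType) (relsD : L -> {set {set T'}}) (f : T -> T'),
    in_Kalpha ar alpha relsD /\ embeds rels relsD f /\ delta alpha relsD setT = 0.
Proof.
move=> relsK all_cov; exists T, rels, id; split=> //; split; first exact: embeds_id.
by apply: (delta_setT_covered alpha_ge0 _ relsK) => // E; apply: leq_trans (ar_ge2 E).
Qed.

Lemma embed_into_tight (n : nat) (T : finType) (rels : L -> {set {set T}}) :
  in_Kalpha ar alpha rels -> (#|[set v | ~~ covered alpha rels v]| <= n)%N ->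
  exists (T' : finType) (relsD : L -> {set {set T'}}) (f : T -> T'),
    in_Kalpha ar alpha relsD /\ embeds rels relsD f /\ delta alpha relsD setT = 0.
Proof.
elim: n T rels => [|n IH] T rels relsK unc_le;
  have [x /= x_unc | all_cov] := pickP [pred v | ~~ covered alpha rels v];
  try by apply: all_covered_tight => // v; apply/negbFE/all_cov.
  by move: unc_le; rewrite leqn0 cards_eq0 => /eqP/setP/(_ x); rewrite !inE x_unc.
have [T1 [rels1 [f [rels1K emb unc1]]]] := cover_vertex relsK x_unc.
have [|T' [relsD [g [relsDK [embD tight]]]]] := IH T1 rels1 rels1K.
  have unc_sub : [set y | ~~ covered alpha rels1 y] \subset
      f @: ([set v | ~~ covered alpha rels v] :\ x).
    apply/subsetP => y; rewrite inE => /unc1[v -> /andP[vx v_unc]].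
    by apply: imset_f; rewrite !inE vx v_unc.
  apply: leq_trans (subset_leq_card unc_sub) (leq_trans (leq_imset_card _ _) _).
  by move: unc_le; rewrite (cardsD1 x) inE x_unc; lia.
by exists T', relsD, (g \o f); split=> //; split=> //; apply: embeds_comp emb embD.
Qed.

End Covering.

Unset Implicit Arguments.

Theorem theorem3p39 (R : realType) (L : finType) (ar : L -> nat)
    (alpha : L -> R)
    (har : forall E : L, (2 <= ar E)%N)
    (halpha : forall E : L, 0 < alpha E /\ alpha E <= 1)
    (hnot : ~ ((forall E : L, ar E = 2%N) /\ (forall E : L, alpha E = 1)))
    (hcoh : coherent alpha)
    (T : finType) (relsA : L -> {set {set T}})
    (hA : in_Kalpha ar alpha relsA)
    (hpos : 0 < delta alpha relsA setT) :
  exists (T' : finType) (relsD : L -> {set {set T'}}) (f : T -> T'),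
    in_Kalpha ar alpha relsD /\ embeds relsA relsD f /\
    delta alpha relsD setT = 0.
Proof.
(* [hnot] only serves to exclude the empty language. *)
have [E0 _ | L_empty] := pickP (@predT L); last first.
  by case: hnot; split=> E; have := L_empty E.
have alpha01 E : 0 < alpha E <= 1 by case: (halpha E) => -> ->.
exact: (embed_into_tight E0 har alpha01 hcoh hA (leqnn _)).
Qed.
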